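(* In the setting of the context, assume that $\widetilde F,\widetilde G\in\mathbb C(s)$, and define $\widetilde f=\tfrac12(\widetilde F+\widetilde F^{\iota_1})$, $\widetilde g=\tfrac12(\widetilde G+\widetilde G^{\iota_2})$, $\widetilde f_h=\tfrac12(\widetilde F-\widetilde F^{\iota_1})$, $\widetilde g_h=\tfrac12(\widetilde G-\widetilde G^{\iota_2})$. Then: (1) the pair $(h_1,h_2)=(\widetilde f,\widetilde g)$ satisfies $\widetilde\gamma_1h_1+\widetilde\gamma_2h_2+\omega=0$ with $h_1^{\iota_1}=h_1$ and $h_2^{\iota_2}=h_2$; (2) the pair $(h_1,h_2)=(\widetilde f_h,\widetilde g_h)$ satisfies $\widetilde\gamma_1h_1+\widetilde\gamma_2h_2=0$ with $h_1^{\iota_1}=-h_1$ and $h_2^{\iota_2}=-h_2$.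
   Context: Let $\mathcal S$ be one of $\mathcal S_1=\{(1,-1),(-1,1),(0,1)\}$, $\mathcal S_2=\{(1,-1),(-1,1),(1,0),(0,1)\}$, $\mathcal S_3=\{(1,-1),(-1,1),(1,1)\}$, $\mathcal S_4=\{(1,-1),(-1,1),(0,1),(1,1)\}$, $\mathcal S_5=\{(1,-1),(-1,1),(1,0),(0,1),(1,1)\}$ with weights $d_{i,j}>0$ on $\mathcal S$ and Boltzmann weights $a,b>0$; $\mathbb F=\mathbb Q((d_{i,j}),a,b)$, $A=1-1/a$, $B=1-1/b$, $\omega=1-A-B$. $Q(x,y)$ is the generating function of weighted quadrant walks with interacting boundaries on $\mathcal S$ (weight $\prod_vd_v^{n_v}a^{n_x}b^{n_y}$, $n_x,n_y$ the numbers of visits after time $0$ to the $x$- and $y$-axis, monomial $x^iy^jt^n$ for endpoint $(i,j)$ and length $n$). Fix a real $t>0$ transcendental over $\mathbb F$, small enough that $Q$ converges for $|x|,|y|<1$. Let $\phi:s\mapsto(x(s),y(s))$ be a fixed rational parametrization by $\mathbb P^1$ of the closure in $\mathbb P^1\times\mathbb P^1$ of $\{xy(1-t\sum_{(i,j)\in\mathcal S}d_{i,j}x^iy^j)=0\}$, with $x(0)=y(0)=x(\infty)=y(\infty)=0$, $x(1/s)=x(s)$, $y(q/s)=y(s)$ for a fixed real $q$ not a root of unity. Let $\iota_1(s)=1/s$, $\iota_2(s)=q/s$ and $h^\tau=h\circ\tau$. Let $\widetilde\gamma_1=A/x(s)-td_{1,-1}/y(s)$, $\widetilde\gamma_2=B/y(s)-td_{-1,1}/x(s)$,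 $\widetilde\gamma=\widetilde\gamma_1/\widetilde\gamma_2$. $\widetilde F$, $\widetilde G$ are the meromorphic continuations to $\mathbb C$ of $x(s)Q(x(s),0)$ and $y(s)Q(0,y(s))$; they satisfy $\widetilde\gamma_1\widetilde F+\widetilde\gamma_2\widetilde G+\omega=0$ and $\widetilde F(s/q)=\frac{\widetilde\gamma}{\widetilde\gamma^{\iota_2}}(s)\widetilde F(s)+\big(\frac{\omega}{\widetilde\gamma_2(s)}-\frac{\omega}{\widetilde\gamma_2^{\iota_2}(s)}\big)\frac{1}{\widetilde\gamma^{\iota_2}(s)}$. *)

From mathcomp Require Import all_boot all_order all_algebra.
From mathcomp Require Import reals.
From mathcomp.real_closed Require Import complex.
Set Implicit Arguments. Unset Strict Implicit. Unset Printing Implicit Defensive.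
Import Order.TTheory GRing.Theory Num.Theory.
Local Open Scope ring_scope.

Definition S1 : seq (int * int) := [:: (1, -1); (-1, 1); (0, 1)].
Definition S2 : seq (int * int) := [:: (1, -1); (-1, 1); (1, 0); (0, 1)].
Definition S3 : seq (int * int) := [:: (1, -1); (-1, 1); (1, 1)].
Definition S4 : seq (int * int) := [:: (1, -1); (-1, 1); (0, 1); (1, 1)].
Definition S5 : seq (int * int) := [:: (1, -1); (-1, 1); (1, 0); (0, 1); (1, 1)].

Section Defs.
Variable R : realType.
Local Notation C := (R[i]).

Definition toC (r : R) : C := Complex r 0.

(* The kernel polynomial x y (1 - t sum_{(i,j) in S} d_{i,j} x^i y^j),
   written with nonnegative exponents i+1, j+1 (all in {0,1,2}). *)
Definition kernel (S : seq (int * int)) (d : int * int -> R) (t : R) (X Y : C) : C :=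
  X * Y - toC t * \sum_(st <- S) toC (d st) * X ^ (st.1 + 1) * Y ^ (st.2 + 1).

(* equality of (rational) functions of s: equality outside a finite set *)
Definition eq_cofin (f g : C -> C) : Prop :=
  exists Z : seq C, forall s, s \notin Z -> f s = g s.

Definition is_ratfun (f : C -> C) : Prop :=
  exists p r : {poly C}, r != 0 /\ forall s, r.[s] != 0 -> f s = p.[s] / r.[s].

Definition nonconst (f : C -> C) : Prop := ~ exists c : C, eq_cofin f (fun _ => c).

(* the rational function f satisfies f(0) = 0 and f(infinity) = 0 *)
Definition zero_at_0_and_inf (f : C -> C) : Prop :=
  exists p r : {poly C}, [/\ r != 0, forall s, r.[s] != 0 -> f s = p.[s] / r.[s],
    r.[0] != 0, p.[0] = 0 & (size p < size r)%N].

Definition gen_injective (x y : C -> C) : Prop :=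
  exists Z : seq C, forall s s', s \notin Z -> s' \notin Z ->
    x s = x s' -> y s = y s' -> s = s'.

Definition iota1 (s : C) : C := s^-1.
Definition iota2 (q : R) (s : C) : C := toC q / s.

Definition Acoef (a : R) : R := 1 - a^-1.   (* A = 1 - 1/a ; B = Acoef b *)
Definition omega (a b : R) : R := 1 - Acoef a - Acoef b.

Definition gam1 (d : int * int -> R) (a t : R) (x y : C -> C) (s : C) : C :=
  toC (Acoef a) / x s - toC (t * d (1, -1)) / y s.
Definition gam2 (d : int * int -> R) (b t : R) (x y : C -> C) (s : C) : C :=
  toC (Acoef b) / y s - toC (t * d (-1, 1)) / x s.
Definition gam (d : int * int -> R) (a b t : R) (x y : C -> C) (s : C) : C :=
  gam1 d a t x y s / gam2 d b t x y s.

End Defs.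

(* Evaluating the q-equation at [iota2 q s] and eliminating [G (iota2 q s)] with the
   kernel relation at [iota2 q s] (using [iota2 q s / q = iota1 s]) gives the reflected
   relation [gam1 F(iota1 s) + gam2 G(iota2 q s) + omega = 0]; half the sum and half the
   difference with the original relation are (1) and (2), and the parities hold because
   [iota1], [iota2 q] are involutions.  The elimination divides by [gam1] and [gam2], which
   vanish only at finitely many [s]: [gam1 s = 0] means [y s = k x s] for a real constant
   [k], and on that line the kernel is a nonzero polynomial in [x], which cannot vanish
   identically at the nonconstant rational function [x]. *)

From mathcomp Require Import all_boot all_order all_algebra.
From mathcomp Require Import reals.
From mathcomp.real_closed Require Import complex.
From mathcomp Require Import ring lra.
Set Implicit Arguments. Unset Strict Implicit. Unset Printing Implicit Defensive.
Import Order.TTheory GRing.Theory Num.Theory.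
Local Open Scope ring_scope.

Lemma poly_roots_finite (F : closedFieldType) (p : {poly F}) :
  p != 0 -> exists r : seq F, forall z, root p z -> z \in r.
Proof.
move=> p0; have [r Dp] := closed_field_poly_normal p.
by exists r => z; rewrite Dp rootZ ?lead_coef_eq0 // root_prod_XsubC.
Qed.

Section Cofinite.
Variable R : realType.
Local Notation C := R[i].

Definition cofinitely (P : C -> Prop) : Prop :=
  exists Z : seq C, forall s, s \notin Z -> P s.

Lemma cofinitely_mono (P Q : C -> Prop) :
  (forall s, P s -> Q s) -> cofinitely P -> cofinitely Q.
Proof. by move=> PQ [Z HZ]; exists Z => s /HZ /PQ. Qed.

Lemma cofinitely_and (P Q : C -> Prop) :
  cofinitely P -> cofinitely Q -> cofinitely (fun s => P s /\ Q s).
Proof.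
move=> [ZP HP] [ZQ HQ]; exists (ZP ++ ZQ) => s.
by rewrite mem_cat negb_or => /andP[/HP ? /HQ ?].
Qed.

Lemma cofinitely_involutive (h : C -> C) (P : C -> Prop) :
  involutive h -> cofinitely P -> cofinitely (fun s => P (h s)).
Proof.
move=> hK [Z HZ]; exists (map h Z) => s hs; apply: HZ.
by apply: contra hs => hsZ; rewrite -[s]hK map_f.
Qed.

Lemma cofinitely_ex (P : C -> Prop) : cofinitely P -> exists s, P s.
Proof.
move=> [Z HZ]; pose L := [seq i%:R : C | i <- iota 0 (size Z).+1].
have uL : uniq L by rewrite map_inj_uniq ?iota_uniq // => i j /eqP; rewrite eqr_nat => /eqP.
have /hasP[s _ /HZ] : has (fun s => s \notin Z) L.
  apply/hasPn => LZ; have := uniq_leq_size uL (fun s Ls => negbNE (LZ s Ls)).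
  by rewrite size_map size_iota ltnn.
by exists s.
Qed.

Lemma cofinitely_nonroot (p : {poly C}) : p != 0 -> cofinitely (fun s => ~~ root p s).
Proof.
by move=> /poly_roots_finite[r rootsP]; exists r => s; apply: contra => /rootsP.
Qed.

Lemma is_ratfun_const (c : C) : is_ratfun (fun _ => c).
Proof. by exists c%:P, 1; split=> [|s _]; rewrite ?oner_neq0 // !hornerC divr1. Qed.

Lemma is_ratfun_scale (k : C) (u : C -> C) : is_ratfun u -> is_ratfun (fun s => k * u s).
Proof.
move=> [p [r [r0 Du]]]; exists (k%:P * p), r; split=> // s rs0.
by rewrite Du // hornerM hornerC mulrA.
Qed.

Lemma ratfun_eq_or_neq (f g : C -> C) : is_ratfun f -> is_ratfun g ->
  eq_cofin f g \/ cofinitely (fun s => f s != g s).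
Proof.
move=> [pf [rf [rf0 Df]]] [pg [rg [rg0 Dg]]].
have dens := cofinitely_and (cofinitely_nonroot rf0) (cofinitely_nonroot rg0).
pose h := pf * rg - pg * rf.
have fgE s : ~~ root rf s /\ ~~ root rg s -> (f s == g s) = root h s.
  move=> [rfs rgs]; rewrite Df // Dg // eqr_div //.
  by rewrite /root /h !hornerE subr_eq0.
have [h0|h0] := eqVneq h 0.
  left; apply: cofinitely_mono dens => s /fgE; rewrite h0 root0.
  by move/eqP.
right; apply: cofinitely_mono (cofinitely_and dens (cofinitely_nonroot h0)).
by move=> s [/fgE ->].
Qed.

Lemma nonconst_ratfun_avoids (u : C -> C) (W : seq C) :
  is_ratfun u -> nonconst u -> cofinitely (fun s => u s \notin W).
Proof.
move=> ru nu; elim: W => [|w W IH]; first by exists [::].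
have [uw|] := ratfun_eq_or_neq ru (is_ratfun_const w); first by case: nu; exists w.
move=> /(cofinitely_and IH); apply: cofinitely_mono => s [uW uw].
by rewrite in_cons negb_or uw.
Qed.

Lemma nonconst_ratfun_not_root (u : C -> C) (P : {poly C}) :
  is_ratfun u -> nonconst u -> P != 0 -> ~ eq_cofin (fun s => P.[u s]) (fun _ => 0).
Proof.
move=> ru nu /poly_roots_finite[r rootsP] Pu.
have [s [/eqP Pus]] := cofinitely_ex (cofinitely_and Pu (nonconst_ratfun_avoids r ru nu)).
by rewrite rootsP.
Qed.

End Cofinite.

Lemma line_ratio_neq0 (K : fieldType) (al c X Y : K) :
  c != 0 -> Y != c / al * X -> al / X - c / Y != 0.
Proof.
move=> c0; apply: contraNneq => /eqP; rewrite subr_eq0 => /eqP E.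
have [Y0|Y0] := eqVneq Y 0.
  move: E; rewrite Y0 invr0 mulr0 => /eqP; rewrite mulf_eq0 invr_eq0.
  by case/orP=> /eqP->; rewrite ?invr0 !(mulr0, mul0r).
have -> : Y = c / (c / Y) by rewrite invf_div mulrCA divff // mulr1.
by rewrite -E invf_div mulrA mulrAC.
Qed.

Section Kernel.
Variable R : realType.
Local Notation C := R[i].

Lemma toCE (r : R) : toC r = real_complex R r. Proof. by []. Qed.

(* Each admissible step set is a sublist of [S5]; extending its weights by [0]
   turns all five kernels into kernels over [S5]. *)
Definition weights_on (S : seq (int * int)) (d : int * int -> R) (st : int * int) : R :=
  if st \in S then d st else 0.

Lemma kernel_weights_on (S : seq (int * int)) (d : int * int -> R) (t : R) (X Y : C) :
  S \in [:: S1; S2; S3; S4; S5] -> kernel S d t X Y = kernel S5 (weights_on S d) t X Y.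
Proof.
rewrite !inE => /or4P[/eqP->|/eqP->|/eqP->|/orP[/eqP->|/eqP->]];
  by rewrite /kernel /weights_on !big_cons !big_nil /= !toCE ?rmorph0 ?mul0r ?add0r.
Qed.

Lemma kernel_S5E (w : int * int -> R) (t : R) (X Y : C) :
  kernel S5 w t X Y = X * Y - toC t * (toC (w (1, -1)) * X ^+ 2 + toC (w (-1, 1)) * Y ^+ 2
    + toC (w (1, 0)) * X ^+ 2 * Y + toC (w (0, 1)) * X * Y ^+ 2 + toC (w (1, 1)) * X ^+ 2 * Y ^+ 2).
Proof.
rewrite /kernel !big_cons big_nil /=.
rewrite (_ : 1 + 1 = 2%:Z) // (_ : -1 + 1 = 0%:Z) // (_ : 0 + 1 = 1%:Z) // -!exprnP.
ring.
Qed.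

Definition swap_step (st : int * int) : int * int := (st.2, st.1).

Lemma kernel_S5_swap (w : int * int -> R) (t : R) (X Y : C) :
  kernel S5 w t X Y = kernel S5 (w \o swap_step) t Y X.
Proof. rewrite !kernel_S5E /=; ring. Qed.

Section Diagonal.
Variables (w : int * int -> R) (t : R).
Hypotheses (t_gt0 : 0 < t) (w_ge0 : forall st, 0 <= w st) (w_gt0 : 0 < w (1, -1))
  (w_off_gt0 : 0 < w (1, 0) + w (0, 1) + w (1, 1)).

Lemma kernel_S5_diag_poly (k : R) :
  exists2 P : {poly C}, P != 0 & forall X, kernel S5 w t X (toC k * X) = P.[X].
Proof.
pose c0 := k - t * (w (1, -1) + w (-1, 1) * k ^+ 2).
pose c1 := t * k * (w (1, 0) + w (0, 1) * k).
pose c2 := t * w (1, 1) * k ^+ 2.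
exists (Poly [:: 0; 0; toC c0; - toC c1; - toC c2]); last first.
  by move=> X; rewrite kernel_S5E horner_Poly /= /c0 /c1 /c2 !toCE; ring.
have coefs_neq0 : ~ [/\ c0 = 0, c1 = 0 & c2 = 0].
  move=> [/eqP c00 /eqP c10 /eqP c20].
  (* [c0 = 0] forces [k > 0], and then [c1], [c2] are sums of nonnegative terms. *)
  have k_gt0 : 0 < k.
    move: c00; rewrite subr_eq0 => /eqP->; apply: mulr_gt0 => //.
    by apply: ltr_wpDr => //; apply: mulr_ge0 => //; apply: sqr_ge0.
  move: c10 c20; rewrite /c1 /c2 !mulf_eq0 !(gt_eqF t_gt0) !(gt_eqF k_gt0) /=.
  rewrite orbF paddr_eq0 ?mulr_ge0 ?w_ge0 ?ltW // mulf_eq0 (gt_eqF k_gt0) orbF.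
  move=> /andP[/eqP w10 /eqP w01] /eqP w11.
  by move: w_off_gt0; rewrite w10 w01 w11 !addr0 ltxx.
apply/eqP => P0; apply: coefs_neq0.
have coefP0 i : [:: 0; 0; toC c0; - toC c1; - toC c2]`_i = 0 by rewrite -coef_Poly P0 coef0.
move: (coefP0 2%N) (coefP0 3%N) (coefP0 4%N) => /= /eqP + /eqP + /eqP.
by rewrite !oppr_eq0 !toCE !fmorph_eq0 => /eqP ? /eqP ? /eqP.
Qed.

Lemma kernel_S5_off_line (x y : C -> C) (k : R) :
  is_ratfun x -> is_ratfun y -> nonconst x ->
  eq_cofin (fun s => kernel S5 w t (x s) (y s)) (fun _ => 0) ->
  cofinitely (fun s => y s != toC k * x s).
Proof.
move=> rx ry nx ker0.
have [yE|//] := ratfun_eq_or_neq ry (is_ratfun_scale (toC k) rx).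
have [P P0 PE] := kernel_S5_diag_poly k.
case: (nonconst_ratfun_not_root rx nx P0).
by apply: cofinitely_mono (cofinitely_and ker0 yE) => s [<- ->]; rewrite PE.
Qed.

Lemma kernel_S5_ratio_neq0 (x y : C -> C) (al c : R) :
  is_ratfun x -> is_ratfun y -> nonconst x -> c != 0 ->
  eq_cofin (fun s => kernel S5 w t (x s) (y s)) (fun _ => 0) ->
  cofinitely (fun s => toC al / x s - toC c / y s != 0).
Proof.
move=> rx ry nx c0 ker0.
apply: cofinitely_mono (kernel_S5_off_line (c / al) rx ry nx ker0) => s ys.
by apply: line_ratio_neq0; rewrite !toCE ?fmorph_eq0 // -fmorph_div.
Qed.

End Diagonal.

Lemma diag_steps_in (S : seq (int * int)) :
  S \in [:: S1; S2; S3; S4; S5] -> (1, -1) \in S /\ (-1, 1) \in S.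
Proof. by rewrite !inE => /or4P[/eqP->|/eqP->|/eqP->|/orP[/eqP->|/eqP->]]. Qed.

Lemma weights_on_ge0 (S : seq (int * int)) (d : int * int -> R) :
  (forall st, st \in S -> 0 < d st) -> forall st, 0 <= weights_on S d st.
Proof. by move=> d_gt0 st; rewrite /weights_on; case: ifP => // /d_gt0/ltW. Qed.

Lemma weights_on_off_gt0 (S : seq (int * int)) (d : int * int -> R) :
  S \in [:: S1; S2; S3; S4; S5] -> (forall st, st \in S -> 0 < d st) ->
  0 < weights_on S d (1, 0) + weights_on S d (0, 1) + weights_on S d (1, 1).
Proof.
move=> S_adm d_gt0.
have w_gt0 st : st \in S -> 0 < weights_on S d st.
  by move=> stS; rewrite /weights_on stS d_gt0.
have := weights_on_ge0 d_gt0 (1, 0); have := weights_on_ge0 d_gt0 (0, 1).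
have := weights_on_ge0 d_gt0 (1, 1).
have : [|| (1, 0) \in S, (0, 1) \in S | (1, 1) \in S].
  by move: S_adm; rewrite !inE => /or4P[/eqP->|/eqP->|/eqP->|/orP[/eqP->|/eqP->]].
by case/or3P=> /w_gt0; lra.
Qed.

Lemma gam_neq0 (S : seq (int * int)) (d : int * int -> R) (a b t : R) (x y : C -> C) :
  S \in [:: S1; S2; S3; S4; S5] -> (forall st, st \in S -> 0 < d st) -> 0 < t ->
  is_ratfun x -> is_ratfun y -> nonconst x -> nonconst y ->
  eq_cofin (fun s => kernel S d t (x s) (y s)) (fun _ => 0) ->
  cofinitely (fun s => gam1 d a t x y s != 0) /\ cofinitely (fun s => gam2 d b t x y s != 0).
Proof.
move=> S_adm d_gt0 t_gt0 rx ry nx ny ker.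
pose w := weights_on S d.
have w_ge0 := weights_on_ge0 d_gt0.
have w_off_gt0 : 0 < w (1, 0) + w (0, 1) + w (1, 1) := weights_on_off_gt0 S_adm d_gt0.
have [in1 in2] := diag_steps_in S_adm.
have [w1_gt0 w2_gt0] : 0 < w (1, -1) /\ 0 < w (-1, 1).
  by rewrite /w /weights_on in1 in2 !d_gt0.
have kerw : eq_cofin (fun s => kernel S5 w t (x s) (y s)) (fun _ => 0).
  by apply: cofinitely_mono ker => s; rewrite kernel_weights_on.
split; first by apply: kernel_S5_ratio_neq0 kerw => //; rewrite mulf_neq0 ?gt_eqF ?d_gt0.
apply: (@kernel_S5_ratio_neq0 (w \o swap_step) t) => //.
- by move=> st; apply: w_ge0.
- by rewrite /= (addrC (w (0, 1))).
- by rewrite mulf_neq0 ?gt_eqF ?d_gt0.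
- by apply: cofinitely_mono kerw => s; rewrite kernel_S5_swap.
Qed.

End Kernel.

Lemma reflected_relation (K : fieldType) (g1 g2 h1 h2 Fu Gu w : K) :
  g1 != 0 -> g2 != 0 -> h2 != 0 -> h1 * Fu + h2 * Gu + w = 0 ->
  g1 * (h1 / h2 / (g1 / g2) * Fu + (w / h2 - w / g2) / (g1 / g2)) + g2 * Gu + w = 0.
Proof.
move=> g10 g20 h20 rel.
have -> : Gu = - (h1 * Fu + w) / h2.
  by apply: (mulfI h20); rewrite mulrCA divff // mulr1 -[RHS]addr0 -rel; ring.
by field; rewrite g10 g20 h20.
Qed.

Lemma half_sum_diff_relations (K : numFieldType) (g1 g2 F F' G G' w : K) :
  g1 * F + g2 * G + w = 0 -> g1 * F' + g2 * G' + w = 0 ->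
  g1 * ((F + F') / 2) + g2 * ((G + G') / 2) + w = 0 /\
  g1 * ((F - F') / 2) + g2 * ((G - G') / 2) = 0.
Proof.
move=> e e'; have two_neq0 : (2 : K) != 0 by rewrite pnatr_eq0.
split; [transitivity ((g1 * F + g2 * G + w + (g1 * F' + g2 * G' + w)) / 2)
       |transitivity ((g1 * F + g2 * G + w - (g1 * F' + g2 * G' + w)) / 2)].
- by field.
- by rewrite e e' addr0 mul0r.
- by field.
- by rewrite e e' subr0 mul0r.
Qed.

Section Reflection.
Variable R : realType.
Local Notation C := R[i].

Lemma iota1K : involutive (@iota1 R).
Proof. by move=> s; rewrite /iota1 invrK. Qed.

Variable q : R.
Hypothesis q_neq0 : q != 0.

Let toCq_neq0 : toC q != 0.
Proof. by rewrite toCE fmorph_eq0. Qed.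

Lemma iota2K : involutive (iota2 q).
Proof. by move=> s; rewrite /iota2 invf_div mulrA mulrC mulKf. Qed.

Lemma iota2_divq (s : C) : iota2 q s / toC q = iota1 s.
Proof. by rewrite /iota2 /iota1 mulrAC divff // mul1r. Qed.

Lemma kernel_relation_reflect (d : int * int -> R) (a b t : R) (x y F G : C -> C) :
  cofinitely (fun s => gam1 d a t x y s != 0) ->
  cofinitely (fun s => gam2 d b t x y s != 0) ->
  eq_cofin (fun s => gam1 d a t x y s * F s + gam2 d b t x y s * G s + toC (omega a b))
           (fun _ => 0) ->
  eq_cofin (fun s => F (s / toC q))
           (fun s => gam d a b t x y s / gam d a b t x y (iota2 q s) * F s
                     + (toC (omega a b) / gam2 d b t x y s
                        - toC (omega a b) / gam2 d b t x y (iota2 q s))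
                       / gam d a b t x y (iota2 q s)) ->
  eq_cofin (fun s => gam1 d a t x y s * F (iota1 s) + gam2 d b t x y s * G (iota2 q s)
                     + toC (omega a b)) (fun _ => 0).
Proof.
move=> g1_neq0 g2_neq0 rel qrel.
have := cofinitely_involutive iota2K (cofinitely_and rel (cofinitely_and qrel g2_neq0)).
move=> /(cofinitely_and (cofinitely_and g1_neq0 g2_neq0)).
apply: cofinitely_mono => s [[g1s g2s] [relu [qrelu g2u]]].
move: qrelu; rewrite iota2K iota2_divq => ->.
exact: reflected_relation.
Qed.

End Reflection.

Theorem lemma2p2 (R : realType) (S : seq (int * int)) (d : int * int -> R)
    (a b t q : R) (x y F G : R[i] -> R[i]) :
  (* step set and weights *)
  S \in [:: S1; S2; S3; S4; S5] ->
  (forall st, st \in S -> 0 < d st) ->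
  0 < a -> 0 < b -> 0 < t ->
  (* q real, not a root of unity (and nonzero) *)
  q != 0 -> (forall n : nat, (0 < n)%N -> q ^+ n != 1) ->
  (* the parametrization phi = (x, y) of the kernel curve *)
  is_ratfun x -> is_ratfun y -> nonconst x -> nonconst y ->
  eq_cofin (fun s => kernel S d t (x s) (y s)) (fun _ => 0) ->
  gen_injective x y ->
  zero_at_0_and_inf x -> zero_at_0_and_inf y ->
  eq_cofin (fun s => x (iota1 s)) x ->
  eq_cofin (fun s => y (iota2 q s)) y ->
  (* F~, G~ are rational and satisfy the functional equations of the context *)
  is_ratfun F -> is_ratfun G ->
  eq_cofin (fun s => gam1 d a t x y s * F s + gam2 d b t x y s * G s + toC (omega a b))
           (fun _ => 0) ->
  eq_cofin (fun s => F (s / toC q))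
           (fun s => gam d a b t x y s / gam d a b t x y (iota2 q s) * F s
                     + (toC (omega a b) / gam2 d b t x y s
                        - toC (omega a b) / gam2 d b t x y (iota2 q s))
                       / gam d a b t x y (iota2 q s)) ->
  let f  := fun s => (F s + F (iota1 s)) / 2 in
  let g  := fun s => (G s + G (iota2 q s)) / 2 in
  let fh := fun s => (F s - F (iota1 s)) / 2 in
  let gh := fun s => (G s - G (iota2 q s)) / 2 in
  (* (1) *)
  [/\ eq_cofin (fun s => gam1 d a t x y s * f s + gam2 d b t x y s * g s + toC (omega a b))
               (fun _ => 0),
      eq_cofin (fun s => f (iota1 s)) f &
      eq_cofin (fun s => g (iota2 q s)) g] /\
  (* (2) *)
  [/\ eq_cofin (fun s => gam1 d a t x y s * fh s + gam2 d b t x y s * gh s)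
               (fun _ => 0),
      eq_cofin (fun s => fh (iota1 s)) (fun s => - fh s) &
      eq_cofin (fun s => gh (iota2 q s)) (fun s => - gh s)].
Proof.
move=> S_adm d_gt0 _ _ t_gt0 q_neq0 _ rx ry nx ny ker _ _ _ _ _ _ _ rel qrel f g fh gh.
have [g1_neq0 g2_neq0] := gam_neq0 a b S_adm d_gt0 t_gt0 rx ry nx ny ker.
have rels := cofinitely_and rel (kernel_relation_reflect q_neq0 g1_neq0 g2_neq0 rel qrel).
split; split.
- by apply: cofinitely_mono rels => s [e e']; case: (half_sum_diff_relations e e').
- by exists [::] => s _; rewrite /f iota1K addrC.
- by exists [::] => s _; rewrite /g (iota2K q_neq0) addrC.
- by apply: cofinitely_mono rels => s [e e']; case: (half_sum_diff_relations e e').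
- by exists [::] => s _; rewrite /fh iota1K -mulNr opprB.
- by exists [::] => s _; rewrite /gh (iota2K q_neq0) -mulNr opprB.
Qed.
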